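(* Let $\psi$ be a smooth even function on $\mathbb{R}$ with $\psi(\lambda)=1$ for $-1\le\lambda\le1$ and $\operatorname{supp}\psi\subset[-2,2]$. Then there is a constant $C$ depending only on $\psi$ such that for all $t\ge1$ and all real $a$, \[ \sup_{L\ge1}\Bigl|\int_0^\infty e^{it\lambda}\sin(a\sqrt\lambda)\,\psi\Bigl(\frac{\sqrt\lambda}{L}\Bigr)\,d\lambda\Bigr|\le C\,t^{-3/2}|a| . \] *)

From Stdlib Require Import Reals.
From Coquelicot Require Import Coquelicot.
Open Scope R_scope.

Definition smooth (psi : R -> R) : Prop := forall (n : nat) (x : R), ex_derive_n psi n x.

(* supp psi  ⊂ [-2,2]: since [-2,2] is closed, this says psi vanishes outside [-2,2]. *)
Definition supp_in_m2_2 (psi : R -> R) : Prop := forall x, 2 < Rabs x -> psi x = 0.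

Definition cexpi (s : R) : Complex.C := (cos s, sin s).

Definition integrand (psi : R -> R) (t a L : R) (lam : R) : Complex.C :=
  Complex.Cmult (cexpi (t * lam)) (Complex.RtoC (sin (a * sqrt lam) * psi (sqrt lam / L))).

Definition I_psi (psi : R -> R) (t a L : R) : Complex.C :=
  @RInt_gen C_R_CompleteNormedModule (integrand psi t a L) (at_point 0) (Rbar_locally p_infty).

(* After the substitution λ = s², the integral becomes ∫ 2s e^{its²} sin(as) ψ(s/L) ds, and
   2s e^{its²} is the derivative of e^{its²}/(it): one integration by parts gains the factor 1/t,
   with no boundary terms because sin(a·0) = 0 and ψ vanishes beyond 2.  In the remaining integral
   of e^{its²} (sin(as) ψ(s/L))', the factor cos(as) is absorbed into the phases ts² ± as, so that
   what is left are amplitudes whose derivatives are O(|a|/L) on an interval of length 3L and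
   vanish at its right end.  A second integration by parts against the primitive of the chirp
   sin(ts² + bs + θ), which is O(t^{-1/2}) uniformly in b and θ (complete the square and use the
   bound on Fresnel integrals), gives the remaining factor t^{-1/2} |a|. *)

From Stdlib Require Import Reals Lra.
From Coquelicot Require Import Coquelicot.
Open Scope R_scope.

Lemma ex_derive_continuous_R (f : R -> R) x : ex_derive f x -> continuous f x.
Proof. exact (@ex_derive_continuous R_AbsRing R_NormedModule f x). Qed.

Lemma ex_RInt_continuous_R (f : R -> R) a b : (forall x, continuous f x) -> ex_RInt f a b.
Proof. intros Hf; apply (ex_RInt_continuous (V := R_CompleteNormedModule)); auto. Qed.

Lemma RInt_ext_R (f g : R -> R) a b :
  (forall x, Rmin a b < x < Rmax a b -> f x = g x) -> RInt f a b = RInt g a b.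
Proof. exact (RInt_ext f g a b). Qed.

Ltac solve_continuous := apply ex_derive_continuous_R; auto_derive; auto.

Lemma Rabs_sin_le x : Rabs (sin x) <= Rabs x.
Proof.
  destruct (MVT_abs sin cos 0 x) as [c [Hc _]].
  { intros c _; apply derivable_pt_lim_sin. }
  rewrite sin_0, !Rminus_0_r in Hc; rewrite Hc.
  assert (Rabs (cos c) <= 1) by (apply Rabs_le, COS_bound).
  generalize (Rabs_pos x); nra.
Qed.

Lemma RInt_by_parts (f df g dg : R -> R) a b : a <= b ->
  (forall x, a <= x <= b -> is_derive f x (df x)) ->
  (forall x, a <= x <= b -> is_derive g x (dg x)) ->
  (forall x, a <= x <= b -> continuous df x) ->
  (forall x, a <= x <= b -> continuous dg x) ->
  RInt (fun x => df x * g x) a b = f b * g b - f a * g a - RInt (fun x => f x * dg x) a b.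
Proof.
  intros Hab Hf Hg Hdf Hdg.
  assert (Hl : forall x, a <= x <= b -> continuous (fun x => df x * g x) x).
  { intros x Hx; apply (continuous_mult df g); auto.
    apply ex_derive_continuous_R; eexists; eauto. }
  assert (Hr : forall x, a <= x <= b -> continuous (fun x => f x * dg x) x).
  { intros x Hx; apply (continuous_mult f dg); auto.
    apply ex_derive_continuous_R; eexists; eauto. }
  assert (Hex : forall h : R -> R, (forall x, a <= x <= b -> continuous h x) -> ex_RInt h a b).
  { intros h Hh; apply (ex_RInt_continuous (V := R_CompleteNormedModule)).
    rewrite Rmin_left, Rmax_right by exact Hab; exact Hh. }
  assert (Hprod : is_RInt (fun x => df x * g x + f x * dg x) a b (f b * g b - f a * g a)).
  { apply (is_RInt_derive (V := R_CompleteNormedModule) (fun x => f x * g x));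
      rewrite Rmin_left, Rmax_right by exact Hab.
    - intros x Hx; apply (is_derive_mult f g); auto; apply Rmult_comm.
    - intros x Hx; apply (continuous_plus (fun x => df x * g x) (fun x => f x * dg x)); auto. }
  apply (is_RInt_unique (V := R_CompleteNormedModule)) in Hprod.
  rewrite (RInt_plus (V := R_CompleteNormedModule)) in Hprod by auto.
  unfold plus in Hprod; simpl in Hprod; lra.
Qed.

Lemma abs_RInt_sin_sqr_tail_le θ p q : 0 < p <= q ->
  Rabs (RInt (fun u => sin (u * u + θ)) p q) <= / p.
Proof.
  intros [Hp Hpq].
  rewrite (RInt_ext_R _ (fun u => sin (u * u + θ) * (2 * u) * / (2 * u))).
  2: { intros u Hu; rewrite Rmin_left, Rmax_right in Hu by lra; field; lra. }
  rewrite (RInt_by_parts (fun u => - cos (u * u + θ)) _ (fun u => / (2 * u))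
             (fun u => - / (2 * u * u))); try lra.
  2: { intros u Hu; auto_derive; auto; ring. }
  2: { intros u Hu; auto_derive; [lra | field; lra]. }
  2: { intros u Hu; solve_continuous. }
  2: { intros u Hu; solve_continuous; repeat split; nra. }
  set (J := RInt _ p q).
  assert (Hprim : is_RInt (fun u => / (2 * u * u)) p q (/ (2 * p) - / (2 * q))).
  { replace (/ (2 * p) - / (2 * q)) with (minus (- / (2 * q)) (- / (2 * p)))
      by (unfold minus, plus, opp; simpl; ring).
    apply (is_RInt_derive (V := R_CompleteNormedModule) (fun u => - / (2 * u)));
      rewrite Rmin_left, Rmax_right by lra; intros u Hu.
    - auto_derive; [lra | field; lra].
    - solve_continuous; repeat split; nra. }
  assert (HJ : Rabs J <= / (2 * p) - / (2 * q)).
  { unfold J; eapply Rle_trans; [apply abs_RInt_le; [lra | ] |].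
    - apply (ex_RInt_continuous (V := R_CompleteNormedModule)).
      rewrite Rmin_left, Rmax_right by lra; intros u Hu; solve_continuous; repeat split; nra.
    - rewrite <- (is_RInt_unique _ _ _ _ Hprim).
      apply RInt_le; [lra | | eexists; exact Hprim | ].
      + apply (ex_RInt_continuous (V := R_CompleteNormedModule)).
        rewrite Rmin_left, Rmax_right by lra; intros u Hu.
        apply continuous_Rabs_comp; solve_continuous; repeat split; nra.
      + intros u Hu.
        assert (0 < / (2 * u * u)) by (apply Rinv_0_lt_compat; nra).
        rewrite Rabs_mult, Rabs_Ropp, Rabs_Ropp, (Rabs_pos_eq (/ (2 * u * u))) by lra.
        assert (Rabs (cos (u * u + θ)) <= 1) by (apply Rabs_le, COS_bound).
        nra. }
  assert (0 < / (2 * q)) by (apply Rinv_0_lt_compat; lra).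
  assert (Hinv : / p = 2 * / (2 * p)) by (field; lra).
  generalize (COS_bound (q * q + θ)) (COS_bound (p * p + θ)); intros.
  apply Rabs_le_between; apply Rabs_le_between in HJ.
  rewrite Hinv; nra.
Qed.

Lemma ex_RInt_sin_quadratic t b θ p q : ex_RInt (fun s => sin (t * s * s + b * s + θ)) p q.
Proof. apply ex_RInt_continuous_R; intros; solve_continuous. Qed.

Lemma ex_RInt_sin_sqr θ p q : ex_RInt (fun u => sin (u * u + θ)) p q.
Proof. apply ex_RInt_continuous_R; intros; solve_continuous. Qed.

Lemma abs_RInt_sin_sqr_from_0_le θ y : 0 <= y -> Rabs (RInt (fun u => sin (u * u + θ)) 0 y) <= 2.
Proof.
  intros Hy.
  assert (Hunit : forall z, 0 <= z <= 1 -> Rabs (RInt (fun u => sin (u * u + θ)) 0 z) <= 1).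
  { intros z Hz; eapply Rle_trans.
    - apply abs_RInt_le_const with (M := 1); [lra | apply ex_RInt_sin_sqr |].
      intros; apply Rabs_le, SIN_bound.
    - nra. }
  destruct (Rle_dec y 1) as [Hy1 | Hy1]; [generalize (Hunit y); lra |].
  rewrite <- (RInt_Chasles (V := R_CompleteNormedModule) _ 0 1 y) by apply ex_RInt_sin_sqr.
  eapply Rle_trans; [apply Rabs_triang |].
  generalize (Hunit 1) (abs_RInt_sin_sqr_tail_le θ 1 y); rewrite Rinv_1; lra.
Qed.

Lemma abs_RInt_sin_sqr_le θ p q : Rabs (RInt (fun u => sin (u * u + θ)) p q) <= 4.
Proof.
  assert (Hfrom0 : forall y, Rabs (RInt (fun u => sin (u * u + θ)) 0 y) <= 2).
  { intros y; destruct (Rle_dec 0 y); [now apply abs_RInt_sin_sqr_from_0_le |].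
    (* the integrand is even *)
    assert (Hsym := RInt_comp_lin (V := R_CompleteNormedModule)
                      (fun u => sin (u * u + θ)) (-1) 0 0 (- y) (ex_RInt_sin_sqr _ _ _)).
    replace (-1 * 0 + 0) with 0 in Hsym by ring; replace (-1 * - y + 0) with y in Hsym by ring.
    rewrite <- Hsym, (RInt_ext_R _ (fun u => - sin (u * u + θ))).
    - rewrite (RInt_opp (V := R_CompleteNormedModule)) by apply ex_RInt_sin_sqr.
      unfold opp; simpl; rewrite Rabs_Ropp; apply abs_RInt_sin_sqr_from_0_le; lra.
    - intros u _; unfold scal; simpl; unfold mult; simpl.
      replace ((-1 * u + 0) * (-1 * u + 0)) with (u * u) by ring; ring. }
  rewrite <- (RInt_Chasles (V := R_CompleteNormedModule) _ p 0 q) by apply ex_RInt_sin_sqr.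
  rewrite <- (opp_RInt_swap (V := R_CompleteNormedModule)) by apply ex_RInt_sin_sqr.
  unfold plus, opp; simpl.
  eapply Rle_trans; [apply Rabs_triang |]; rewrite Rabs_Ropp.
  generalize (Hfrom0 p) (Hfrom0 q); lra.
Qed.

Lemma abs_RInt_sin_quadratic_le t b θ p q : 0 < t ->
  Rabs (RInt (fun s => sin (t * s * s + b * s + θ)) p q) <= 4 / sqrt t.
Proof.
  intros Ht.
  set (r := sqrt t); assert (Hr : 0 < r) by (apply sqrt_lt_R0; lra).
  assert (Hrr : r * r = t) by (apply sqrt_sqrt; lra).
  set (c := b / (2 * t)); set (θ' := θ - b * b / (4 * t)).
  (* completing the square: t s^2 + b s + θ = (r s + r c)^2 + θ' *)
  assert (Hlin := RInt_comp_lin (V := R_CompleteNormedModule)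
                    (fun u => sin (u * u + θ')) r (r * c) p q (ex_RInt_sin_sqr _ _ _)).
  rewrite (RInt_ext_R _ (fun s => r * sin (t * s * s + b * s + θ))) in Hlin.
  - rewrite (RInt_scal (V := R_CompleteNormedModule)) in Hlin by apply ex_RInt_sin_quadratic.
    assert (Hbound := abs_RInt_sin_sqr_le θ' (r * p + r * c) (r * q + r * c)).
    rewrite <- Hlin in Hbound; unfold scal in Hbound; simpl in Hbound; unfold mult in Hbound; simpl in Hbound.
    rewrite Rabs_mult, (Rabs_pos_eq r) in Hbound by lra.
    apply (Rmult_le_reg_l r); [exact Hr |].
    replace (r * (4 / r)) with 4 by (field; lra); exact Hbound.
  - intros s _; unfold scal; simpl; unfold mult; simpl.
    replace ((r * s + r * c) * (r * s + r * c)) with (r * r * ((s + c) * (s + c))) by ring.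
    rewrite Hrr; unfold θ', c; f_equal; f_equal; field; lra.
Qed.

Lemma abs_RInt_mul_le_by_parts (f A dA : R -> R) K B R0 : 0 <= R0 ->
  (forall x, continuous f x) ->
  (forall x, 0 <= x <= R0 -> Rabs (RInt f 0 x) <= K) ->
  (forall x, 0 <= x <= R0 -> is_derive A x (dA x)) ->
  (forall x, 0 <= x <= R0 -> continuous dA x) ->
  A R0 = 0 ->
  (forall x, 0 <= x <= R0 -> Rabs (dA x) <= B) ->
  Rabs (RInt (fun s => f s * A s) 0 R0) <= K * B * R0.
Proof.
  intros HR Hf HF HA HdA HAR HB.
  set (F := fun x => RInt f 0 x).
  assert (HdF : forall x, is_derive F x (f x)).
  { intros x; apply (is_derive_RInt (V := R_NormedModule) f F 0 x); [| apply Hf].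
    apply filter_forall; intros y.
    apply (RInt_correct (V := R_CompleteNormedModule)), ex_RInt_continuous_R, Hf. }
  rewrite (RInt_by_parts F f A dA 0 R0); auto.
  assert (F0 : F 0 = 0) by apply (RInt_point (V := R_CompleteNormedModule)).
  rewrite F0, HAR, Rmult_0_r, Rmult_0_l, Rminus_0_r, Rminus_0_l, Rabs_Ropp.
  assert (HB0 : 0 <= B) by (eapply Rle_trans; [apply Rabs_pos | apply (HB 0); lra]).
  replace (K * B * R0) with ((R0 - 0) * (K * B)) by ring.
  apply abs_RInt_le_const; [exact HR | |].
  - apply (ex_RInt_continuous (V := R_CompleteNormedModule)).
    rewrite Rmin_left, Rmax_right by exact HR; intros x Hx.
    apply (continuous_mult F dA); auto.
    apply ex_derive_continuous_R; eexists; apply HdF.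
  - intros x Hx; rewrite Rabs_mult.
    apply Rmult_le_compat; try apply Rabs_pos; auto.
Qed.

Lemma abs_RInt_sin_quadratic_mul_le t b θ (A dA : R -> R) B R0 : 0 < t -> 0 <= R0 ->
  (forall x, 0 <= x <= R0 -> is_derive A x (dA x)) ->
  (forall x, 0 <= x <= R0 -> continuous dA x) ->
  A R0 = 0 ->
  (forall x, 0 <= x <= R0 -> Rabs (dA x) <= B) ->
  Rabs (RInt (fun s => sin (t * s * s + b * s + θ) * A s) 0 R0) <= 4 / sqrt t * B * R0.
Proof.
  intros Ht HR HA HdA HAR HB.
  apply (abs_RInt_mul_le_by_parts _ A dA); auto.
  - intros x; solve_continuous.
  - intros x _; apply abs_RInt_sin_quadratic_le, Ht.
Qed.

Lemma cos_chirp_mul_split t θ a s p q :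
  cos (t * s * s + θ) * (a * cos (a * s) * p + q) =
  a / 2 * (sin (t * s * s + a * s + (θ + PI / 2)) * p)
  + a / 2 * (sin (t * s * s + - a * s + (θ + PI / 2)) * p)
  + sin (t * s * s + 0 * s + (θ + PI / 2)) * q.
Proof.
  assert (Hshift : forall u, sin (u + PI / 2) = cos u)
    by (intros u; rewrite sin_plus, sin_PI2, cos_PI2; ring).
  replace (t * s * s + a * s + (θ + PI / 2)) with (t * s * s + θ + a * s + PI / 2) by ring.
  replace (t * s * s + - a * s + (θ + PI / 2)) with (t * s * s + θ - a * s + PI / 2) by ring.
  replace (t * s * s + 0 * s + (θ + PI / 2)) with (t * s * s + θ + PI / 2) by ring.
  rewrite !Hshift, (cos_plus (t * s * s + θ) (a * s)), (cos_minus (t * s * s + θ) (a * s)); field.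
Qed.

Section ChirpIntegral.

Variables psi dpsi d2psi : R -> R.
Hypothesis psi_derive : forall x, is_derive psi x (dpsi x).
Hypothesis dpsi_derive : forall x, is_derive dpsi x (d2psi x).
Hypothesis d2psi_ex_derive : forall x, ex_derive d2psi x.
Hypothesis psi_3 : psi 3 = 0.
Hypothesis dpsi_3 : dpsi 3 = 0.
Variables D1 D2 : R.
Hypothesis dpsi_le : forall x, 0 <= x <= 3 -> Rabs (dpsi x) <= D1.
Hypothesis d2psi_le : forall x, 0 <= x <= 3 -> Rabs (d2psi x) <= D2.
Variables t a L : R.
Hypothesis t_gt0 : 0 < t.
Hypothesis L_gt0 : 0 < L.

Let psi_ex_derive x : ex_derive psi x.
Proof. eexists; apply psi_derive. Qed.

Let dpsi_ex_derive x : ex_derive dpsi x.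
Proof. eexists; apply dpsi_derive. Qed.

Let Derive_psi x : Derive psi x = dpsi x.
Proof. apply is_derive_unique, psi_derive. Qed.

Let Derive_dpsi x : Derive dpsi x = d2psi x.
Proof. apply is_derive_unique, dpsi_derive. Qed.

Let sqrt_t_gt0 : 0 < sqrt t.
Proof. apply sqrt_lt_R0, t_gt0. Qed.

Let div_L_bounds x : 0 <= x <= 3 * L -> 0 <= x / L <= 3.
Proof.
  intros Hx; split; [apply Rdiv_le_0_compat; lra |].
  apply Rmult_le_reg_r with L; [lra |]; unfold Rdiv; rewrite Rmult_assoc, Rinv_l; lra.
Qed.

Lemma abs_RInt_chirp_cutoff_le b θ :
  Rabs (RInt (fun s => sin (t * s * s + b * s + θ) * psi (s / L)) 0 (3 * L))
  <= 12 * D1 / sqrt t.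
Proof.
  replace (12 * D1 / sqrt t) with (4 / sqrt t * (D1 / L) * (3 * L)) by (field; lra).
  apply (abs_RInt_sin_quadratic_mul_le _ _ _ _ (fun s => dpsi (s / L) / L)); try lra.
  - intros x _; auto_derive; auto; rewrite Derive_psi; unfold Rdiv; ring.
  - intros x _; solve_continuous.
  - replace (3 * L / L) with 3 by (field; lra); exact psi_3.
  - intros x Hx; unfold Rdiv; rewrite Rabs_mult, Rabs_inv, (Rabs_pos_eq L) by lra.
    apply Rmult_le_compat_r; [apply Rlt_le, Rinv_0_lt_compat, L_gt0 |].
    apply dpsi_le, div_L_bounds, Hx.
Qed.

Lemma abs_derive_sin_dpsi_le x : 0 <= x <= 3 * L ->
  Rabs (a * cos (a * x) * (dpsi (x / L) / L) + sin (a * x) * (d2psi (x / L) / L / L))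
  <= Rabs a * (D1 + 3 * D2) / L.
Proof.
  intros Hx; assert (Hy := div_L_bounds x Hx).
  assert (HiL : 0 < / L) by (apply Rinv_0_lt_compat, L_gt0).
  assert (HD2 : 0 <= D2) by (eapply Rle_trans; [apply Rabs_pos | apply d2psi_le, Hy]).
  assert (Hcos : Rabs a * Rabs (cos (a * x)) <= Rabs a * 1)
    by (apply Rmult_le_compat_l; [apply Rabs_pos | apply Rabs_le, COS_bound]).
  assert (Hsin : Rabs (sin (a * x)) <= Rabs a * x).
  { eapply Rle_trans; [apply Rabs_sin_le |].
    rewrite Rabs_mult, (Rabs_pos_eq x); lra. }
  assert (H1 : Rabs (a * cos (a * x) * (dpsi (x / L) / L)) <= Rabs a * D1 / L).
  { unfold Rdiv; rewrite !Rabs_mult, Rabs_inv, (Rabs_pos_eq L) by lra.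
    rewrite <- Rmult_assoc; apply Rmult_le_compat_r; [lra |].
    apply Rmult_le_compat; auto using Rabs_pos, Rmult_le_pos; lra. }
  assert (H2 : Rabs (sin (a * x) * (d2psi (x / L) / L / L)) <= Rabs a * (3 * D2) / L).
  { unfold Rdiv; rewrite !Rabs_mult, !Rabs_inv, (Rabs_pos_eq L) by lra.
    apply Rle_trans with (Rabs a * x * (D2 * / L * / L)).
    - apply Rmult_le_compat; auto using Rabs_pos.
      + apply Rmult_le_pos; [apply Rmult_le_pos; [apply Rabs_pos | lra] | lra].
      + do 2 (apply Rmult_le_compat_r; [lra |]); apply d2psi_le, Hy.
    - replace (Rabs a * x * (D2 * / L * / L)) with (Rabs a * D2 * / L * (x / L)) by (field; lra).
      replace (Rabs a * (3 * D2) * / L) with (Rabs a * D2 * / L * 3) by ring.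
      apply Rmult_le_compat_l; [| lra].
      apply Rmult_le_pos; [apply Rmult_le_pos; [apply Rabs_pos | lra] | lra]. }
  eapply Rle_trans; [apply Rabs_triang |].
  replace (Rabs a * (D1 + 3 * D2) / L) with (Rabs a * D1 / L + Rabs a * (3 * D2) / L) by (field; lra).
  lra.
Qed.

Lemma abs_RInt_chirp_sin_dpsi_le b θ :
  Rabs (RInt (fun s => sin (t * s * s + b * s + θ) * (sin (a * s) * (dpsi (s / L) / L))) 0 (3 * L))
  <= 12 * (Rabs a * (D1 + 3 * D2)) / sqrt t.
Proof.
  replace (12 * (Rabs a * (D1 + 3 * D2)) / sqrt t)
    with (4 / sqrt t * (Rabs a * (D1 + 3 * D2) / L) * (3 * L)) by (field; lra).
  apply (abs_RInt_sin_quadratic_mul_le _ _ _ _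
           (fun s => a * cos (a * s) * (dpsi (s / L) / L) + sin (a * s) * (d2psi (s / L) / L / L)));
    try lra.
  - intros x _; auto_derive; auto; rewrite Derive_dpsi; unfold Rdiv; ring.
  - intros x _; solve_continuous.
  - replace (3 * L / L) with 3 by (field; lra); rewrite dpsi_3; unfold Rdiv; ring.
  - exact abs_derive_sin_dpsi_le.
Qed.

Lemma abs_RInt_cos_chirp_mul_le θ :
  Rabs (RInt (fun s => cos (t * s * s + θ)
                       * (a * cos (a * s) * psi (s / L) + sin (a * s) * (dpsi (s / L) / L))) 0 (3 * L))
  <= Rabs a * (24 * D1 + 36 * D2) / sqrt t.
Proof.
  set (chirp := fun b s => sin (t * s * s + b * s + (θ + PI / 2))).
  rewrite (RInt_ext_R _ (fun s => a / 2 * (chirp a s * psi (s / L)) + a / 2 * (chirp (- a) s * psi (s / L))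
                                   + chirp 0 s * (sin (a * s) * (dpsi (s / L) / L)))).
  2: { intros s _; apply cos_chirp_mul_split. }
  assert (Hex : forall g : R -> R, (forall x, ex_derive g x) -> ex_RInt g 0 (3 * L))
    by (intros g Hg; apply ex_RInt_continuous_R; intros x; apply ex_derive_continuous_R, Hg).
  rewrite !(RInt_plus (V := R_CompleteNormedModule)), !(RInt_scal (V := R_CompleteNormedModule));
    try (apply Hex; intros x; unfold chirp; auto_derive; auto).
  unfold plus, scal; simpl; unfold mult; simpl.
  assert (Hp := abs_RInt_chirp_cutoff_le a (θ + PI / 2)).
  assert (Hm := abs_RInt_chirp_cutoff_le (- a) (θ + PI / 2)).
  assert (Hd := abs_RInt_chirp_sin_dpsi_le 0 (θ + PI / 2)).
  assert (Ha2 : Rabs (a / 2) = Rabs a / 2)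
    by (unfold Rdiv; rewrite Rabs_mult, Rabs_inv, (Rabs_pos_eq 2); lra).
  eapply Rle_trans; [apply Rabs_triang |].
  eapply Rle_trans; [apply Rplus_le_compat_r, Rabs_triang |].
  rewrite !Rabs_mult, Ha2.
  assert (Hah : 0 <= Rabs a / 2) by (generalize (Rabs_pos a); lra).
  apply Rmult_le_compat_l with (r := Rabs a / 2) in Hp, Hm; [| exact Hah ..].
  replace (Rabs a * (24 * D1 + 36 * D2) / sqrt t)
    with (Rabs a / 2 * (12 * D1 / sqrt t) + Rabs a / 2 * (12 * D1 / sqrt t)
          + 12 * (Rabs a * (D1 + 3 * D2)) / sqrt t) by (field; lra).
  unfold chirp; lra.
Qed.

Lemma abs_RInt_chirp_le θ :
  Rabs (RInt (fun l => sin (t * l + θ) * (sin (a * sqrt l) * psi (sqrt l / L))) 0 (3 * L * (3 * L)))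
  <= Rabs a * (24 * D1 + 36 * D2) / (t * sqrt t).
Proof.
  set (K := fun s => sin (a * s) * psi (s / L)).
  set (f := fun l => sin (t * l + θ) * K (sqrt l)).
  change (fun l => sin (t * l + θ) * (sin (a * sqrt l) * psi (sqrt l / L))) with f.
  assert (Hsubst : RInt (fun s => scal (2 * s) (f (s * s))) 0 (3 * L) = RInt f (0 * 0) (3 * L * (3 * L))).
  { apply (RInt_comp (V := R_CompleteNormedModule) f (fun s => s * s) (fun s => 2 * s));
      rewrite Rmin_left, Rmax_right by lra; intros x Hx.
    - apply (continuous_mult (fun l => sin (t * l + θ)) (fun l => K (sqrt l))); [solve_continuous |].
      apply (continuous_comp sqrt K); [| unfold K; solve_continuous].
      apply continuity_pt_filterlim, continuity_pt_sqrt; nra.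
    - split; [auto_derive; auto; ring | solve_continuous]. }
  rewrite Rmult_0_r in Hsubst; rewrite <- Hsubst; clear Hsubst.
  (* 2 s sin (t s^2 + θ) is the derivative of - cos (t s^2 + θ) / t *)
  rewrite (RInt_ext_R _ (fun s => sin (t * s * s + θ) * (2 * s) * K s)).
  2: { intros s Hs; rewrite Rmin_left, Rmax_right in Hs by lra.
       unfold scal; simpl; unfold mult; simpl; unfold f.
       rewrite sqrt_square by lra; replace (t * (s * s)) with (t * s * s) by ring; ring. }
  rewrite (RInt_by_parts (fun s => - cos (t * s * s + θ) / t) _ K
             (fun s => a * cos (a * s) * psi (s / L) + sin (a * s) * (dpsi (s / L) / L))); try lra.
  2: { intros x _; auto_derive; auto; field; lra. }
  2: { intros x _; unfold K; auto_derive; auto; rewrite Derive_psi; unfold Rdiv; ring. }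
  2, 3: intros x _; solve_continuous.
  assert (HK0 : K 0 = 0) by (unfold K; rewrite Rmult_0_r, sin_0; ring).
  assert (HK3 : K (3 * L) = 0) by (unfold K; replace (3 * L / L) with 3 by (field; lra); rewrite psi_3; ring).
  rewrite HK0, HK3, (RInt_ext_R _ (fun s => - / t * (cos (t * s * s + θ)
                 * (a * cos (a * s) * psi (s / L) + sin (a * s) * (dpsi (s / L) / L))))).
  2: { intros s _; field; lra. }
  rewrite (RInt_scal (V := R_CompleteNormedModule)) by (apply ex_RInt_continuous_R; intros; solve_continuous).
  unfold scal; simpl; unfold mult; simpl.
  rewrite !Rmult_0_r, !Rminus_0_r, Rminus_0_l, Ropp_mult_distr_l, Ropp_involutive, Rabs_mult.
  rewrite (Rabs_pos_eq (/ t)) by (apply Rlt_le, Rinv_0_lt_compat, t_gt0).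
  replace (Rabs a * (24 * D1 + 36 * D2) / (t * sqrt t))
    with (/ t * (Rabs a * (24 * D1 + 36 * D2) / sqrt t)) by (field; lra).
  apply Rmult_le_compat_l; [apply Rlt_le, Rinv_0_lt_compat, t_gt0 |].
  apply abs_RInt_cos_chirp_mul_le.
Qed.

End ChirpIntegral.

Lemma continuous_bounded_on_segment (q : R -> R) lo hi : lo <= hi ->
  (forall x, continuous q x) -> exists D, forall x, lo <= x <= hi -> Rabs (q x) <= D.
Proof.
  intros Hlh Hq.
  destruct (continuity_ab_maj (fun x => Rabs (q x)) lo hi Hlh) as [m [Hm _]].
  - intros c _; apply continuity_pt_filterlim, continuous_Rabs_comp, Hq.
  - exists (Rabs (q m)); exact Hm.
Qed.

Lemma is_RInt_gen_p_infty_of_eventually {V : NormedModule R_AbsRing} (f : R -> V) a M l :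
  (forall y, M < y -> is_RInt f a y l) -> is_RInt_gen f (at_point a) (Rbar_locally p_infty) l.
Proof.
  intros Hf P HP.
  apply Filter_prod with (fun x => x = a) (fun y => M < y).
  - reflexivity.
  - exists M; auto.
  - intros x y -> Hy; exists l; split; [apply Hf, Hy | apply locally_singleton, HP].
Qed.

Lemma is_RInt_extend_by_zero (f : R -> R) a M y l : M < y -> is_RInt f a M l ->
  (forall x, M < x < y -> f x = 0) -> is_RInt f a y l.
Proof.
  intros HMy Hl Hz.
  rewrite <- (Rplus_0_r l).
  apply (is_RInt_Chasles (V := R_NormedModule) f a M y l 0 Hl).
  apply (is_RInt_ext (V := R_NormedModule) (fun _ => 0)).
  - rewrite Rmin_left, Rmax_right by lra; intros x Hx; symmetry; apply Hz, Hx.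
  - assert (H0 := is_RInt_const (V := R_NormedModule) M y 0).
    unfold scal in H0; simpl in H0; unfold mult in H0; simpl in H0; rewrite Rmult_0_r in H0; exact H0.
Qed.

Lemma is_RInt_chirp_truncated psi t a L θ y : (forall x, continuous psi x) -> 0 < L ->
  supp_in_m2_2 psi -> 3 * L * (3 * L) < y ->
  let g := fun l => sin (t * l + θ) * (sin (a * sqrt l) * psi (sqrt l / L)) in
  is_RInt g 0 y (RInt g 0 (3 * L * (3 * L))).
Proof.
  intros Hpsi HL Hsupp Hy g.
  apply (is_RInt_extend_by_zero _ _ (3 * L * (3 * L))); [exact Hy | |].
  - apply (RInt_correct (V := R_CompleteNormedModule)), (ex_RInt_continuous (V := R_CompleteNormedModule)).
    rewrite Rmin_left, Rmax_right by nra; intros x Hx.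
    apply (continuous_mult (fun l => sin (t * l + θ)) (fun l => sin (a * sqrt l) * psi (sqrt l / L)));
      [solve_continuous |].
    apply (continuous_comp sqrt (fun s => sin (a * s) * psi (s / L))).
    + apply continuity_pt_filterlim, continuity_pt_sqrt; lra.
    + apply (continuous_mult (fun s => sin (a * s)) (fun s => psi (s / L))); [solve_continuous |].
      apply (continuous_comp (fun s => s / L) psi); [solve_continuous | apply Hpsi].
  - intros x Hx; unfold g.
    assert (Hs : 3 * L < sqrt x).
    { rewrite <- (sqrt_square (3 * L)) by lra; apply sqrt_lt_1_alt; nra. }
    assert (Hq : 3 <= sqrt x / L).
    { apply Rmult_le_reg_r with L; [lra |]; unfold Rdiv; rewrite Rmult_assoc, Rinv_l; lra. }
    rewrite Hsupp, !Rmult_0_r; [reflexivity |].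
    rewrite Rabs_pos_eq; lra.
Qed.

Lemma I_psi_components psi t a L : (forall x, continuous psi x) -> 0 < L -> supp_in_m2_2 psi ->
  let g θ := fun l => sin (t * l + θ) * (sin (a * sqrt l) * psi (sqrt l / L)) in
  I_psi psi t a L = (RInt (g (PI / 2)) 0 (3 * L * (3 * L)), RInt (g 0) 0 (3 * L * (3 * L))).
Proof.
  intros Hpsi HL Hsupp g.
  apply (is_RInt_gen_unique (V := C_R_CompleteNormedModule)
           (Fa := at_point 0) (Fb := Rbar_locally p_infty)).
  apply (is_RInt_gen_p_infty_of_eventually _ _ (3 * L * (3 * L))); intros y Hy.
  apply (is_RInt_fct_extend_pair (U := R_NormedModule) (V := R_NormedModule)).
  - apply (is_RInt_ext (V := R_NormedModule) (g (PI / 2))).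
    + intros l _; unfold g, integrand, cexpi, Cmult, RtoC; simpl.
      rewrite sin_plus, sin_PI2, cos_PI2; ring.
    + apply is_RInt_chirp_truncated; assumption.
  - apply (is_RInt_ext (V := R_NormedModule) (g 0)).
    + intros l _; unfold g, integrand, cexpi, Cmult, RtoC; simpl.
      rewrite Rplus_0_r; ring.
    + apply is_RInt_chirp_truncated; assumption.
Qed.

Lemma Cmod_le_of_components (z : C) B :
  Rabs (fst z) <= B -> Rabs (snd z) <= B -> Cmod z <= 2 * B.
Proof.
  intros H1 H2.
  assert (Hs2 : sqrt 2 <= 2).
  { rewrite <- (sqrt_square 2) at 2 by lra; apply sqrt_le_1_alt; lra. }
  assert (Hmax : 0 <= Rmax (Rabs (fst z)) (Rabs (snd z)) <= B).
  { split; [eapply Rle_trans; [apply Rabs_pos | apply Rmax_l] | apply Rmax_lub; assumption]. }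
  eapply Rle_trans; [apply Cmod_2Rmax |].
  apply Rmult_le_compat; lra || apply sqrt_pos.
Qed.

Lemma Derive_outside_supp psi x : supp_in_m2_2 psi -> 2 < Rabs x -> Derive psi x = 0.
Proof.
  intros Hsupp Hx.
  apply is_derive_unique, (is_derive_ext_loc (fun _ => 0));
    [| apply (is_derive_const (K := R_AbsRing) (V := R_NormedModule))].
  assert (Heps : 0 < Rabs x - 2) by lra.
  exists (mkposreal _ Heps); intros y Hy; change (Rabs (y - x) < Rabs x - 2) in Hy.
  symmetry; apply Hsupp.
  generalize (Rabs_triang_inv x y); rewrite <- Rabs_Ropp, Ropp_minus_distr in Hy; lra.
Qed.

Lemma Rpower_neg_three_halves t : 0 < t -> Rpower t (- 3 / 2) = / (t * sqrt t).
Proof.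
  intros Ht; replace (- 3 / 2) with (- (1 + / 2)) by field.
  rewrite Rpower_Ropp, Rpower_plus, Rpower_1, Rpower_sqrt; auto.
Qed.

Theorem lemma2p4 (psi : R -> R) :
  smooth psi ->
  (forall x, psi (- x) = psi x) ->
  (forall x, -1 <= x <= 1 -> psi x = 1) ->
  supp_in_m2_2 psi ->
  exists C : R, forall t a : R, 1 <= t ->
    forall L : R, 1 <= L ->
      Complex.Cmod (I_psi psi t a L) <= C * Rpower t (-3/2) * Rabs a.
Proof.
  intros Hsmooth _ _ Hsupp.
  set (dpsi := Derive psi); set (d2psi := Derive dpsi).
  assert (Hpsi : forall x, is_derive psi x (dpsi x))
    by (intros x; apply Derive_correct, (Hsmooth 1%nat)).
  assert (Hdpsi : forall x, is_derive dpsi x (d2psi x))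
    by (intros x; apply Derive_correct, (Hsmooth 2%nat)).
  assert (Hd2psi : forall x, ex_derive d2psi x) by (intros x; apply (Hsmooth 3%nat)).
  assert (Hcont : forall (f : R -> R) df, (forall x, is_derive f x (df x)) -> forall x, continuous f x)
    by (intros f df Hf x; apply ex_derive_continuous_R; eexists; apply Hf).
  assert (psi_3 : psi 3 = 0) by (apply Hsupp; rewrite Rabs_pos_eq; lra).
  assert (dpsi_3 : dpsi 3 = 0) by (apply Derive_outside_supp; [exact Hsupp | rewrite Rabs_pos_eq; lra]).
  destruct (continuous_bounded_on_segment dpsi 0 3) as [D1 HD1]; [lra | eapply Hcont, Hdpsi |].
  destruct (continuous_bounded_on_segment d2psi 0 3) as [D2 HD2];
    [lra | intros x; apply ex_derive_continuous_R, Hd2psi |].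
  exists (2 * (24 * D1 + 36 * D2)); intros t a Ht L HL.
  rewrite (I_psi_components psi t a L) by (eapply Hcont, Hpsi || lra || assumption).
  rewrite Rpower_neg_three_halves by lra.
  assert (Hst : 0 < sqrt t) by (apply sqrt_lt_R0; lra).
  replace (2 * (24 * D1 + 36 * D2) * / (t * sqrt t) * Rabs a)
    with (2 * (Rabs a * (24 * D1 + 36 * D2) / (t * sqrt t))) by (field; lra).
  apply Cmod_le_of_components; simpl;
    apply (abs_RInt_chirp_le psi dpsi d2psi); assumption || lra.
Qed.
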